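(* Let $\Omega\subset\mathbb{R}^d$ be a bounded domain, $\kappa\in L^\infty(\Omega)$ with $\kappa\ge\kappa_0>0$, and $a(u,v)=\int_\Omega\kappa\nabla u\cdot\nabla v\,dx$, $\|u\|_a^2=a(u,u)$. Let $V_H\subset H^1_0(\Omega)$ be a finite-dimensional space with $V_H=V_{H,1}+V_{H,2}$ for subspaces $V_{H,1},V_{H,2}$. Let $\tau>0$, $N\ge 2$, and let $u_{H,1}^n\in V_{H,1}$, $u_{H,2}^n\in V_{H,2}$ ($n=0,\dots,N$), $u_H^n=u_{H,1}^n+u_{H,2}^n$, satisfy for $n=1,\dots,N-1$: $$(u_H^{n+1}-2u_H^n+u_H^{n-1},w)+\frac{\tau^2}{2}a(u_{H,1}^{n+1}+u_{H,1}^{n-1}+2u_{H,2}^n,w)=0\quad\forall w\in V_{H,1},$$ $$(u_H^{n+1}-2u_H^n+u_H^{n-1},w)+\tau^2a(u_{H,1}^{n}+u_{H,2}^n,w)=0\quad\forall w\in V_{H,2}.$$ Define for $n=0,\dots,N-1$ $$E^{n+\frac12}=\|u_H^{n+1}-u_H^n\|^2+\frac{\tau^2}{2}\sum_{i=1,2}\big(\|u_{H,i}^{n+1}\|_a^2+\|u_{H,i}^n\|_a^2\big)+\tau^2a(u_{H,2}^{n+1},u_{H,1}^n)+\tau^2a(u_{H,1}^{n+1},u_{H,2}^n)-\frac{\tau^2}{2}\|u_{H,2}^{n+1}-u_{H,2}^n\|_a^2.$$ Then $E^{n+\frac12}=E^{n-\frac12}$ for all $n=1,\dots,N-1$.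
   Context: $(\cdot,\cdot)$ and $\|\cdot\|$ denote the $L^2(\Omega)$ inner product and norm. The two equations form the partially explicit (implicit in $V_{H,1}$, explicit in $V_{H,2}$) time discretization of the wave equation $u_{tt}=\nabla\cdot(\kappa\nabla u)$ with homogeneous Dirichlet boundary conditions. *)

From HB Require Import structures.
From mathcomp Require Import all_boot all_order all_algebra.
From mathcomp Require Import reals.
Set Implicit Arguments. Unset Strict Implicit. Unset Printing Implicit Defensive.
Import Order.TTheory GRing.Theory Num.Theory.
Local Open Scope ring_scope.

Definition sym_bilinear (R : realFieldType) (V : lmodType R) (b : V -> V -> R) : Prop :=
  (forall u v, b u v = b v u) /\
  (forall (c : R) (u v w : V), b (c *: u + v) w = c * b u w + b v w).

Definition pos_def (R : realFieldType) (V : lmodType R) (b : V -> V -> R) : Prop :=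
  forall u, u != 0 -> 0 < b u u.

(* E^{n+1/2} with ip = L^2 inner product, a = energy form,
   u1 n = u_{H,1}^n, u2 n = u_{H,2}^n. *)
Definition energy (R : realFieldType) (V : lmodType R) (ip a : V -> V -> R)
  (tau : R) (u1 u2 : nat -> V) (n : nat) : R :=
  let u := fun k => u1 k + u2 k in
  ip (u n.+1 - u n) (u n.+1 - u n)
  + tau ^+ 2 / 2 * ((a (u1 n.+1) (u1 n.+1) + a (u1 n) (u1 n))
                    + (a (u2 n.+1) (u2 n.+1) + a (u2 n) (u2 n)))
  + tau ^+ 2 * a (u2 n.+1) (u1 n)
  + tau ^+ 2 * a (u1 n.+1) (u2 n)
  - tau ^+ 2 / 2 * a (u2 n.+1 - u2 n) (u2 n.+1 - u2 n).

From HB Require Import structures.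
From mathcomp Require Import all_boot all_order all_algebra.
From mathcomp Require Import reals.
From mathcomp Require Import ring.
Import Order.TTheory GRing.Theory Num.Theory.
Local Open Scope ring_scope.

(* Conservation is a purely algebraic identity, as for the leapfrog scheme:
   E^{n+1/2} - E^{n-1/2} is the first equation tested with
   u_{H,1}^{n+1} - u_{H,1}^{n-1} plus the second one tested with
   u_{H,2}^{n+1} - u_{H,2}^{n-1}.  Two observations make it work: the
   correction term of E turns the a-norms of u_{H,2} into the cross term
   tau^2 a(u_{H,2}^{n+1}, u_{H,2}^n), and the L^2 terms telescope by
   (p - q, p + q) = |p|^2 - |q|^2 with p = u^{n+1} - u^n, q = u^n - u^{n-1}. *)

Section SymBilinear.

Context {R : realFieldType} {V : lmodType R} {b : V -> V -> R}.
Hypothesis b_sym_bilinear : sym_bilinear b.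

Lemma bilinC u v : b u v = b v u.
Proof. exact: (proj1 b_sym_bilinear). Qed.

Lemma bilinDl u v w : b (u + v) w = b u w + b v w.
Proof. by have := proj2 b_sym_bilinear 1 u v w; rewrite scale1r mul1r. Qed.

Lemma bilinZl c u w : b (c *: u) w = c * b u w.
Proof.
have b0l : b 0 w = 0.
  by apply: (addrI (b 0 w)); rewrite -bilinDl !addr0.
by have := proj2 b_sym_bilinear c u 0 w; rewrite addr0 b0l addr0.
Qed.

Lemma bilinBl u v w : b (u - v) w = b u w - b v w.
Proof. by rewrite bilinDl -scaleN1r bilinZl mulN1r. Qed.

Lemma bilinDr u v w : b w (u + v) = b w u + b w v.
Proof. by rewrite bilinC bilinDl !(bilinC w). Qed.

Lemma bilinBr u v w : b w (u - v) = b w u - b w v.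
Proof. by rewrite bilinC bilinBl !(bilinC w). Qed.

Lemma bilin_sqrB u v : b (u - v) (u - v) = b u u + b v v - 2 * b u v.
Proof. by rewrite bilinBl !bilinBr (bilinC v u); ring. Qed.

Lemma bilin_diff_sqr u v : b (u - v) (u + v) = b u u - b v v.
Proof. by rewrite bilinBl !bilinDr (bilinC v u); ring. Qed.

End SymBilinear.

Section Energy.

Variables (R : realFieldType) (V : lmodType R) (ip a : V -> V -> R).
Hypotheses (ipB : sym_bilinear ip) (aB : sym_bilinear a).
Variables (tau : R) (u1 u2 : nat -> V).

Let u k := u1 k + u2 k.

Lemma energyE n :
  energy ip a tau u1 u2 n =
    ip (u n.+1 - u n) (u n.+1 - u n)
    + tau ^+ 2 / 2 * (a (u1 n.+1) (u1 n.+1) + a (u1 n) (u1 n))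
    + tau ^+ 2 * (a (u2 n.+1) (u1 n) + a (u1 n.+1) (u2 n) + a (u2 n.+1) (u2 n)).
Proof. by rewrite /energy (bilin_sqrB aB); field. Qed.

Lemma energy_diff n : (0 < n)%N ->
  energy ip a tau u1 u2 n - energy ip a tau u1 u2 n.-1 =
    (ip (u n.+1 - 2%:R *: u n + u n.-1) (u1 n.+1 - u1 n.-1)
     + tau ^+ 2 / 2 * a (u1 n.+1 + u1 n.-1 + 2%:R *: u2 n) (u1 n.+1 - u1 n.-1))
  + (ip (u n.+1 - 2%:R *: u n + u n.-1) (u2 n.+1 - u2 n.-1)
     + tau ^+ 2 * a (u1 n + u2 n) (u2 n.+1 - u2 n.-1)).
Proof.
case: n => // n _; rewrite !energyE /=.
have ip_leapfrog :
    ip (u n.+2 - 2%:R *: u n.+1 + u n) (u1 n.+2 - u1 n)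
    + ip (u n.+2 - 2%:R *: u n.+1 + u n) (u2 n.+2 - u2 n)
  = ip (u n.+2 - u n.+1) (u n.+2 - u n.+1) - ip (u n.+1 - u n) (u n.+1 - u n).
  rewrite -(bilinDr ipB) -(bilin_diff_sqr ipB); congr ip.
    move: (u n.+2) (u n.+1) (u n) => x y z.
    by rewrite scaler_nat mulr2n opprB addrA opprD addrA addrAC.
  by rewrite (addrA (u n.+2 - u n.+1)) subrK /u opprD addrACA.
have a_first :
    a (u1 n.+2 + u1 n + 2%:R *: u2 n.+1) (u1 n.+2 - u1 n)
  = a (u1 n.+2) (u1 n.+2) - a (u1 n) (u1 n)
    + 2 * (a (u1 n.+2) (u2 n.+1) - a (u2 n.+1) (u1 n)).
  rewrite (bilinDl aB) (bilinC aB (u1 n.+2 + u1 n)) (bilin_diff_sqr aB).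
  by rewrite (bilinZl aB) (bilinBr aB) (bilinC aB (u2 n.+1) (u1 n.+2)).
have a_second :
    a (u1 n.+1 + u2 n.+1) (u2 n.+2 - u2 n)
  = a (u2 n.+2) (u1 n.+1) - a (u1 n.+1) (u2 n)
    + (a (u2 n.+2) (u2 n.+1) - a (u2 n.+1) (u2 n)).
  rewrite (bilinDl aB) !(bilinBr aB) (bilinC aB (u1 n.+1) (u2 n.+2)).
  by rewrite (bilinC aB (u2 n.+1) (u2 n.+2)).
by rewrite addrACA ip_leapfrog a_first a_second; field.
Qed.

End Energy.

Theorem mainTheorem1 (R : realType) (V : vectType R)
  (ip a : V -> V -> R)
  (Hip : sym_bilinear ip) (Hip_pd : pos_def ip)
  (Ha : sym_bilinear a) (Ha_pd : pos_def a)
  (V1 V2 : {vspace V}) (HV : (V1 + V2)%VS = fullv)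
  (tau : R) (Htau : 0 < tau) (N : nat) (HN : (2 <= N)%N)
  (u1 u2 : nat -> V)
  (Hu1 : forall n, (n <= N)%N -> u1 n \in V1)
  (Hu2 : forall n, (n <= N)%N -> u2 n \in V2)
  (Heq1 : forall n, (1 <= n)%N -> (n <= N.-1)%N ->
     forall w, w \in V1 ->
       ip ((u1 n.+1 + u2 n.+1) - 2%:R *: (u1 n + u2 n) + (u1 n.-1 + u2 n.-1)) w
       + tau ^+ 2 / 2 * a (u1 n.+1 + u1 n.-1 + 2%:R *: u2 n) w = 0)
  (Heq2 : forall n, (1 <= n)%N -> (n <= N.-1)%N ->
     forall w, w \in V2 ->
       ip ((u1 n.+1 + u2 n.+1) - 2%:R *: (u1 n + u2 n) + (u1 n.-1 + u2 n.-1)) w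
       + tau ^+ 2 * a (u1 n + u2 n) w = 0) :
  forall n, (1 <= n)%N -> (n <= N.-1)%N ->
    energy ip a tau u1 u2 n = energy ip a tau u1 u2 n.-1.
Proof.
move=> n n_gt0 n_le_predN.
have le_succ_N : (n.+1 <= N)%N by rewrite -(ltn_predK HN) ltnS.
have le_pred_N : (n.-1 <= N)%N by rewrite (leq_trans (leq_pred n)) // ltnW.
have test1 := Heq1 n n_gt0 n_le_predN _ (rpredB (Hu1 _ le_succ_N) (Hu1 _ le_pred_N)).
have test2 := Heq2 n n_gt0 n_le_predN _ (rpredB (Hu2 _ le_succ_N) (Hu2 _ le_pred_N)).
by apply/eqP; rewrite -subr_eq0 energy_diff // test1 test2 addr0.
Qed.
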